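(* Let $\mathcal{H}^c_{D_n}$ be the degenerate affine Hecke–Clifford algebra of type $D_n$, $n\ge4$, and let $w\in W_{D_n}$ have signed cycle type $(\lambda,\mu)$. If $n$ is odd and it is not the case that ($\lambda\in\mathcal{OP}$, $\mu\in\mathcal{EP}$ and $\ell(\mu)$ even), then $w\in[\mathcal{H}^c_{D_n},\mathcal{H}^c_{D_n}]$. If $n$ is even, it is not the case that ($\lambda\in\mathcal{OP}$, $\mu\in\mathcal{EP}$ and $\ell(\mu)$ even), and it is not the case that ($\lambda=\emptyset$ and $\mu\in\mathcal{SOP}_n$), then $w\in[\mathcal{H}^c_{D_n},\mathcal{H}^c_{D_n}]$.
   Context: $W_{D_n}$ is the group of signed permutations of $\{1,\dots,n\}$ with an even number of sign changes, generated by $s_i=(i,i+1)$ ($1\le i\le n-1$) and $s_n$ with $s_n(e_{n-1})=-e_n$, $s_n(e_n)=-e_{n-1}$. The signed cycle type $(\lambda,\mu)$ of $w$: $\lambda$ (resp. $\mu$) lists the lengths of cycles of the underlying permutation with an even (resp. odd) number of sign changes. $\mathcal{OP}$: partitions with all parts odd; $\mathcal{EP}$: all parts even; $\mathcal{SOP}_n$: partitions of $n$ into distinct odd parts; $\ell(\mu)$ number of parts. With parameter $u\in\mathbb{C}$, $\mathcal{H}^c_{D_n}$ is generated by commuting $x_1,\dots,x_n$, Clifford generators $c_1,\dots,c_n$ ($c_i^2=1$, $c_ic_j=-c_jc_i$, $i\ne j$) and $W_{D_n}$, with these as subalgebras and relations $x_ic_i=-c_ix_i$, $x_ic_j=c_jx_i$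 ($i\ne j$), $\sigma c_i=c_{\sigma(i)}\sigma$ for $\sigma\in\langle s_1,\dots,s_{n-1}\rangle$, $x_{i+1}s_i-s_ix_i=u(1-c_{i+1}c_i)$, $x_js_i=s_ix_j$ ($j\ne i,i+1$) for $i<n$, and $s_nc_n=-c_{n-1}s_n$, $s_nc_i=c_is_n$ ($i\ne n-1,n$), $s_nx_n+x_{n-1}s_n=-u(1+c_{n-1}c_n)$, $s_nx_i=x_is_n$ ($i\ne n-1,n$). $[H,H]$ is the linear span of all $hh'-h'h$. *)

From mathcomp Require Import all_boot all_order all_algebra all_fingroup.
From mathcomp Require Import Rstruct complex.
Set Implicit Arguments. Unset Strict Implicit. Unset Printing Implicit Defensive.
Import GRing.Theory.
Local Open Scope ring_scope.

Definition CC : fieldType := complex Rdefinitions.R.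

(* A signed permutation of {1..n} is encoded as a permutation of the set
   {+-e_i} = 'I_n * bool, where (i,false) stands for e_i and (i,true) for
   -e_i, commuting with negation. *)
Definition sneg n (v : 'I_n * bool) : 'I_n * bool := (v.1, ~~ v.2).

Definition signed_perm n (w : {perm 'I_n * bool}) : bool :=
  [forall v, w (sneg v) == sneg (w v)].

Definition under n (w : {perm 'I_n * bool}) (i : 'I_n) : 'I_n := (w (i, false)).1.
Definition signch n (w : {perm 'I_n * bool}) (i : 'I_n) : bool := (w (i, false)).2.

Definition WD n : {set {perm 'I_n * bool}} :=
  [set w | signed_perm w && ~~ odd #|[set i | signch w i]|].

(* s_i = (i, i+1) (for 0-indexed i, j = i+1) *)
Definition sswap n (i j : 'I_n) : {perm 'I_n * bool} :=
  (tperm (i, false) (j, false) * tperm (i, true) (j, true))%g.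
(* s_n : e_a |-> -e_b, e_b |-> -e_a  (a = n-1, b = n in 1-indexed terms) *)
Definition snswap n (a b : 'I_n) : {perm 'I_n * bool} :=
  (tperm (a, false) (b, true) * tperm (a, true) (b, false))%g.

Definition Sgens n : {set {perm 'I_n * bool}} :=
  [set sswap p.1 p.2 | p : ('I_n * 'I_n) & val p.2 == (val p.1).+1].

Definition wcycles n (w : {perm 'I_n * bool}) : seq (seq 'I_n) :=
  [seq fingraph.orbit (under w) r | r <- enum 'I_n & froot (under w) r == r].

Definition ctype_lambda n (w : {perm 'I_n * bool}) : seq nat :=
  sort geq [seq size cy | cy <- wcycles w & ~~ odd (count (signch w) cy)].
Definition ctype_mu n (w : {perm 'I_n * bool}) : seq nat :=
  sort geq [seq size cy | cy <- wcycles w & odd (count (signch w) cy)].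

Definition isOP (p : seq nat) : bool := all odd p.
Definition isEP (p : seq nat) : bool := all (fun k => ~~ odd k) p.
Definition isSOP (n : nat) (p : seq nat) : bool :=
  [&& uniq p, all odd p & sumn p == n].

(* Group law:
   mathcomp's (g * h)%g is "first g, then h", i.e. the composite h o g, so
   rho (g * h) = rho h * rho g expresses rho(h o g) = rho h rho g. *)
Definition HC_rels n (u : CC) (A : algType CC) (x c : 'I_n -> A)
    (rho : {perm 'I_n * bool} -> A) : Prop :=
  (forall i j, x i * x j = x j * x i) /\
  (forall i, c i * c i = 1) /\
  (forall i j, i != j -> c i * c j = - (c j * c i)) /\
  rho 1%g = 1 /\
  (forall g h, g \in WD n -> h \in WD n -> rho (g * h)%g = rho h * rho g) /\
  (forall i, x i * c i = - (c i * x i)) /\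
  (forall i j, i != j -> x i * c j = c j * x i) /\
  (forall s i, s \in <<Sgens n>>%g -> rho s * c i = c (under s i) * rho s) /\
  (forall i j : 'I_n, val j = (val i).+1 ->
     x j * rho (sswap i j) - rho (sswap i j) * x i = u *: (1 - c j * c i)) /\
  (forall i j k : 'I_n, val j = (val i).+1 -> k != i -> k != j ->
     x k * rho (sswap i j) = rho (sswap i j) * x k) /\
  (forall a b : 'I_n, val a = (n - 2)%N -> val b = (n - 1)%N ->
     rho (snswap a b) * c b = - (c a * rho (snswap a b))) /\
  (forall a b k : 'I_n, val a = (n - 2)%N -> val b = (n - 1)%N -> k != a -> k != b ->
     rho (snswap a b) * c k = c k * rho (snswap a b)) /\
  (forall a b : 'I_n, val a = (n - 2)%N -> val b = (n - 1)%N ->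
     rho (snswap a b) * x b + x a * rho (snswap a b) = - (u *: (1 + c a * c b))) /\
  (forall a b k : 'I_n, val a = (n - 2)%N -> val b = (n - 1)%N -> k != a -> k != b ->
     rho (snswap a b) * x k = x k * rho (snswap a b)).

Definition in_comm_span (A : algType CC) (z : A) : Prop :=
  exists s : seq (CC * A * A),
    z = \sum_(t <- s) t.1.1 *: (t.1.2 * t.2 - t.2 * t.1.2).

From mathcomp Require Import all_boot all_order all_algebra all_fingroup.
From mathcomp Require Import Rstruct complex.
From mathcomp Require Import zify.
Import GRing.Theory.
Local Open Scope ring_scope.
Set Implicit Arguments. Unset Strict Implicit. Unset Printing Implicit Defensive.

(* Every w in W_{D_n} acts on the Clifford generators by rho(w) c_k =
   ±c_{w(k)} rho(w), the sign being the sign change of w at k: this holds for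
   the generators s_i and s_n, and is multiplicative.  Let t be a cycle of w of
   length l with m sign changes and C = c_{t_1} ... c_{t_l}.  Pushing rho(w)
   through C permutes the factors cyclically at the cost of (-1)^m, and
   restoring the order costs (-1)^(l-1); so if l and m have the same parity,
   rho(w) C = - C rho(w), and since C is invertible,
   rho(w) = 1/2 [rho(w) C^-1, C] is a commutator.  Such a cycle exists unless
   every cycle with an even number of sign changes has odd length, every cycle
   with an odd number has even length, and (since w has an even number of sign
   changes) there is an even number of the latter. *)

Lemma odd_count (T : Type) (p : pred T) (s : seq T) :
  odd (count p s) = \big[addb/false]_(x <- s) p x.
Proof. by elim: s => [|y s IH]; rewrite ?big_nil // big_cons /= oddD IH; case: (p y). Qed.

Lemma odd_card_set (T : finType) (p : pred T) :
  odd #|[set x | p x]| = \big[addb/false]_x p x.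
Proof.
rewrite -sum1_card (big_morph odd oddD (erefl : odd 0 = false)) big_mkcond /=.
by apply: eq_bigr => x _; rewrite inE; case: (p x).
Qed.

Lemma adjacent_tperm_gen n (G : {group {perm 'I_n}}) :
  (forall i j : 'I_n, val j = (val i).+1 -> tperm i j \in G) -> forall p, p \in G.
Proof.
move=> adjG.
have tpermG k : forall x y : 'I_n, y = (x + k)%N :> nat -> tperm x y \in G.
  elim: k => [|k IH] x y yE; first by rewrite (val_inj (etrans yE (addn0 x))) tperm1.
  have z_lt_n : (x + k < n)%N by have := ltn_ord y; lia.
  pose z := Ordinal z_lt_n.
  have zyG : tperm z y \in G by apply: adjG; rewrite /= yE addnS.
  have [xz|nxz] := eqVneq x z; first by rewrite xz.
  have nyx : y != x by rewrite -val_eqE /= yE; lia.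
  have <- : (tperm x z ^ tperm z y)%g = tperm x y.
    by rewrite tpermJ tpermL tpermD // eq_sym.
  by rewrite groupJ // IH.
have tG x y : tperm x y \in G.
  wlog le_xy : x y / (x <= y)%N.
    by move=> wlog_G; case: (leqP x y) => [/wlog_G|/ltnW/wlog_G]; rewrite // tpermC.
  by apply: (tpermG (y - x)%N); rewrite subnKC.
by move=> p; have [ts -> _] := prod_tpermP p; rewrite group_prod // => t _; apply: tG.
Qed.

Section SignedPermutations.
Variable n : nat.
Implicit Types (g h w : {perm 'I_n * bool}) (i j k : 'I_n).

Lemma signed_permE g : signed_perm g -> forall v, g v = (under g v.1, signch g v.1 (+) v.2).
Proof.
move=> /forallP g_signed [i []] /=; last by rewrite addbF /under /signch; case: (g _).
by rewrite -[(i, true)]/(sneg (i, false)) (eqP (g_signed _)) addbT.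
Qed.

Lemma under_inj g : signed_perm g -> injective (under g).
Proof.
move=> g_signed i j eq_ij; have gE := signed_permE g_signed.
have := gE (i, signch g i); have := gE (j, signch g j).
by rewrite /= !addbb eq_ij => <- /perm_inj[].
Qed.

Lemma signed_permM g h : signed_perm g -> signed_perm h -> signed_perm (g * h)%g.
Proof.
move=> /forallP g_signed /forallP h_signed; apply/forallP => v.
by rewrite !permM (eqP (g_signed v)) (eqP (h_signed _)).
Qed.

Lemma underM g h i : signed_perm h -> under (g * h)%g i = under h (under g i).
Proof. by move=> h_signed; rewrite /under permM (signed_permE h_signed). Qed.

Lemma signchM g h i : signed_perm h ->
  signch (g * h)%g i = signch g i (+) signch h (under g i).
Proof. by move=> h_signed; rewrite /signch permM (signed_permE h_signed) addbC. Qed.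

Lemma WD_signed w : w \in WD n -> signed_perm w.
Proof. by rewrite inE => /andP[]. Qed.

Lemma mulWD g h : g \in WD n -> h \in WD n -> (g * h)%g \in WD n.
Proof.
rewrite !inE => /andP[g_signed g_even] /andP[h_signed h_even].
rewrite signed_permM //= odd_card_set.
under eq_bigr do rewrite signchM //.
rewrite big_split /= -(reindex_inj (P := predT) (F := signch h) (under_inj g_signed)) /=.
by rewrite -!odd_card_set (negbTE g_even) (negbTE h_even).
Qed.

Definition uperm_fun (p : {perm 'I_n}) (v : 'I_n * bool) := (p v.1, v.2).

Lemma uperm_inj (p : {perm 'I_n}) : injective (uperm_fun p).
Proof. by move=> [i s] [j t] [/perm_inj -> ->]. Qed.

Definition uperm (p : {perm 'I_n}) : {perm 'I_n * bool} := perm (@uperm_inj p).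

Lemma upermE p v : uperm p v = (p v.1, v.2).
Proof. by rewrite permE. Qed.

Lemma upermM : {morph uperm : p q / (p * q)%g}.
Proof. by move=> p q; apply/permP => v; rewrite permM !upermE permM. Qed.

Canonical uperm_morphism := @Morphism _ _ [set: {perm 'I_n}] uperm (in2W upermM).

Lemma uperm_signed p : signed_perm (uperm p).
Proof. by apply/forallP => -[i s]; rewrite !upermE. Qed.

Lemma signch_uperm p i : signch (uperm p) i = false.
Proof. by rewrite /signch upermE. Qed.

Lemma upermWD p : uperm p \in WD n.
Proof.
rewrite inE uperm_signed.
suff -> : [set i | signch (uperm p) i] = set0 by rewrite cards0.
by apply/setP => i; rewrite !inE signch_uperm.
Qed.

Lemma unsigned_uperm g : signed_perm g -> (forall i, signch g i = false) ->
  {p | g = uperm p}.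
Proof.
move=> g_signed unsigned_g; exists (perm (under_inj g_signed)).
by apply/permP => -[i s]; rewrite (signed_permE g_signed) upermE permE /= unsigned_g.
Qed.

Lemma sswapE i j v : sswap i j v = (tperm i j v.1, v.2).
Proof.
have [<-|nij] := eqVneq i j; first by rewrite /sswap !tperm1 mulg1 !perm1; case: v.
case: v => k s; rewrite permM !permE /=.
have [->|nki] := eqVneq k i; last have [->|nkj] := eqVneq k j; case: s;
  by do 2 rewrite /= ?xpair_eqE ?eqxx ?(eq_sym j i)
                   ?(negbTE nij) ?(negbTE nki) ?(negbTE nkj) ?andbF ?andbT.
Qed.

Lemma uperm_tperm i j : uperm (tperm i j) = sswap i j.
Proof. by apply/permP => v; rewrite upermE sswapE. Qed.

Lemma uperm_gen p : uperm p \in <<Sgens n>>%g.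
Proof.
suff /morphpreP[] : p \in (uperm @*^-1 <<Sgens n>>)%g by [].
apply: adjacent_tperm_gen => i j ji; rewrite mem_morphpre ?inE //= uperm_tperm.
by apply/mem_gen/imsetP; exists (i, j); rewrite ?inE /= ?ji.
Qed.

Definition sflip_fun i j (v : 'I_n * bool) := (v.1, v.2 (+) ((v.1 == i) || (v.1 == j))).

Lemma sflip_inj i j : injective (sflip_fun i j).
Proof. by move=> [k s] [l t] /= [<- /addIb ->]. Qed.

Definition sflip i j : {perm 'I_n * bool} := perm (@sflip_inj i j).

Lemma sflipE i j v : sflip i j v = (v.1, v.2 (+) ((v.1 == i) || (v.1 == j))).
Proof. by rewrite permE. Qed.

Lemma sflip_signed i j : signed_perm (sflip i j).
Proof. by apply/forallP => -[k s]; rewrite !sflipE /sneg /= negb_add. Qed.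

Lemma under_sflip i j k : under (sflip i j) k = k.
Proof. by rewrite /under sflipE. Qed.

Lemma signch_sflip i j k : signch (sflip i j) k = (k == i) || (k == j).
Proof. by rewrite /signch sflipE. Qed.

Lemma sflipWD i j : i != j -> sflip i j \in WD n.
Proof.
move=> nij; rewrite inE sflip_signed.
suff -> : [set k | signch (sflip i j) k] = [set i; j] by rewrite cards2 nij.
by apply/setP => k; rewrite !inE signch_sflip.
Qed.

Lemma sflipK i j : (sflip i j * sflip i j)%g = 1%g.
Proof. by apply/permP => -[k s]; rewrite permM perm1 !sflipE /= addbK. Qed.

Lemma sflip_conj (t : {perm 'I_n}) i j :
  sflip (t i) (t j) = (uperm t^-1 * sflip i j * uperm t)%g.
Proof.
apply/permP => -[k s]; rewrite !permM !upermE !sflipE /= permKV.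
by rewrite -!(canF_eq (permKV t)).
Qed.

Lemma snswapE i j v : i != j ->
  snswap i j v = (tperm i j v.1, v.2 (+) ((v.1 == i) || (v.1 == j))).
Proof.
move=> nij; case: v => k s; rewrite permM !permE /=.
have [->|nki] := eqVneq k i; last have [->|nkj] := eqVneq k j; case: s;
  by do 2 rewrite /= ?xpair_eqE ?eqxx ?(eq_sym j i)
                   ?(negbTE nij) ?(negbTE nki) ?(negbTE nkj) ?andbF ?andbT.
Qed.

Lemma snswap_signed i j : i != j -> signed_perm (snswap i j).
Proof. by move=> nij; apply/forallP => -[k s]; rewrite !snswapE // /sneg /= negb_add. Qed.

Lemma under_snswap i j k : i != j -> under (snswap i j) k = tperm i j k.
Proof. by move=> nij; rewrite /under snswapE. Qed.

Lemma signch_snswap i j k : i != j -> signch (snswap i j) k = (k == i) || (k == j).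
Proof. by move=> nij; rewrite /signch snswapE. Qed.

Lemma snswapWD i j : i != j -> snswap i j \in WD n.
Proof.
move=> nij; rewrite inE snswap_signed //.
suff -> : [set k | signch (snswap i j) k] = [set i; j] by rewrite cards2 nij.
by apply/setP => k; rewrite !inE signch_snswap.
Qed.

Lemma tperm_in_pair i j k : (tperm i j k == i) || (tperm i j k == j) = (k == i) || (k == j).
Proof. by case: tpermP => [->|->|]; rewrite ?eqxx ?orbT. Qed.

Lemma snswapK i j : i != j -> (snswap i j * snswap i j)%g = 1%g.
Proof.
move=> nij; apply/permP => v.
by rewrite permM perm1 !snswapE //= tpermK tperm_in_pair addbK; case: v.
Qed.

Lemma sflip_sswap_snswap i j : i != j -> sflip i j = (sswap i j * snswap i j)%g.
Proof.
move=> nij; apply/permP => -[k s].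
by rewrite permM sflipE sswapE snswapE //= tpermK tperm_in_pair.
Qed.

End SignedPermutations.

Section Cycles.
Variable T : finType.
Implicit Types (f : T -> T) (x : T).

Lemma map_traject f x m : map f (traject f x m) = traject f (f x) m.
Proof. by elim: m x => [|m IH] x //=; rewrite IH. Qed.

Lemma map_orbit f x : injective f -> map f (fingraph.orbit f x) = rot 1 (fingraph.orbit f x).
Proof.
move=> f_inj; rewrite /fingraph.orbit -orderSpred map_traject [in RHS]trajectS rot1_cons.
by rewrite trajectSr -iterSr orderSpred iter_order.
Qed.

Lemma orbit_size_gt0 f x : (0 < size (fingraph.orbit f x))%N.
Proof. by rewrite fingraph.size_orbit fingraph.order_gt0. Qed.

End Cycles.

Section CycleType.
Variable n : nat.
Implicit Types w : {perm 'I_n * bool}.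

Lemma odd_card_signch_cycles w : signed_perm w ->
  odd #|[set i | signch w i]| =
  odd (count (fun cy => odd (count (signch w) cy)) (wcycles w)).
Proof.
move=> w_signed; set f := under w; have f_inj : injective f := under_inj w_signed.
have f_sym : connect_sym (frel f) by move=> i j; apply: fconnect_sym.
rewrite odd_card_set odd_count /wcycles big_map big_filter big_enum_cond /=.
rewrite (partition_big (froot f) (fun r => froot f r == r)) /=; last first.
  by move=> i _; rewrite root_root.
apply: eq_bigr => r /eqP root_r.
rewrite odd_count big_uniq ?fingraph.orbit_uniq //.
by apply: eq_bigl => i; rewrite -fingraph.fconnect_orbit -{1}root_r eq_sym (root_connect f_sym).
Qed.

Lemma cycle_of_equal_parity w : w \in WD n ->
  ~ [&& isOP (ctype_lambda w), isEP (ctype_mu w) & ~~ odd (size (ctype_mu w))] ->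
  exists r, odd (count (signch w) (fingraph.orbit (under w) r))
            = odd (size (fingraph.orbit (under w) r)).
Proof.
move=> wW not_exceptional.
pose same_parity r := odd (count (signch w) (fingraph.orbit (under w) r))
                      == odd (size (fingraph.orbit (under w) r)).
have [/existsP[r /eqP]|/existsPn parity_differ] := boolP [exists r, same_parity r].
  by exists r.
exfalso; apply: not_exceptional.
have cycle_parity cy : cy \in wcycles w -> odd (count (signch w) cy) = ~~ odd (size cy).
  by case/mapP => r _ ->; move: (parity_differ r); rewrite /same_parity; do 2 case: odd.
apply/and3P; split.
- rewrite /isOP /ctype_lambda all_sort all_map; apply/allP => cy.
  by rewrite mem_filter => /andP[/negbTE even_cy /cycle_parity]; rewrite even_cy => /esym /negbFE.
- rewrite /isEP /ctype_mu all_sort all_map; apply/allP => cy.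
  by rewrite mem_filter => /andP[odd_cy /cycle_parity]; rewrite odd_cy => /esym.
- move: wW; rewrite inE => /andP[w_signed].
  by rewrite /ctype_mu size_sort size_map size_filter -odd_card_signch_cycles.
Qed.

End CycleType.

Lemma anticommuting_in_comm_span (A : algType CC) (r C D : A) :
  C * D = 1 -> D * C = 1 -> r * C = - (C * r) -> in_comm_span r.
Proof.
move=> CD DC rC; exists [:: ((2%:R : CC)^-1, r * D, C)].
rewrite big_seq1 /= -mulrA DC mulr1 mulrA -[C * r]opprK -rC mulNr -mulrA CD mulr1.
rewrite opprK -mulr2n -(scaler_nat (R := CC) 2 r) scalerA mulVf ?scale1r //.
by rewrite Num.Theory.pnatr_eq0.
Qed.

Section CliffordAction.
Variables (n : nat) (A : algType CC) (c : 'I_n -> A) (rho : {perm 'I_n * bool} -> A).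
Hypothesis c_sq : forall i, c i * c i = 1.
Hypothesis c_anticomm : forall i j, i != j -> c i * c j = - (c j * c i).
Hypothesis rho1 : rho 1%g = 1.
Hypothesis rhoM : forall g h, g \in WD n -> h \in WD n -> rho (g * h)%g = rho h * rho g.
Hypothesis rho_Sgens_c : forall s i, s \in <<Sgens n>>%g -> rho s * c i = c (under s i) * rho s.
Hypothesis rho_snswap_c_last : forall a b : 'I_n, val a = (n - 2)%N -> val b = (n - 1)%N ->
  rho (snswap a b) * c b = - (c a * rho (snswap a b)).
Hypothesis rho_snswap_c : forall a b k : 'I_n, val a = (n - 2)%N -> val b = (n - 1)%N ->
  k != a -> k != b -> rho (snswap a b) * c k = c k * rho (snswap a b).

Implicit Types (g h w : {perm 'I_n * bool}) (i j k : 'I_n).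

Definition equivariant g :=
  forall k, rho g * c k = (-1) ^+ signch g k *: (c (under g k) * rho g).

Lemma equivariantM g h : g \in WD n -> h \in WD n ->
  equivariant g -> equivariant h -> equivariant (g * h)%g.
Proof.
move=> gW hW g_eq h_eq k; have h_signed := WD_signed hW.
rewrite rhoM // -mulrA g_eq -scalerAr !mulrA h_eq -scalerAl scalerA.
by rewrite signchM // underM // signr_addb mulrC.
Qed.

Lemma equivariant_uperm p : equivariant (uperm p).
Proof. by move=> k; rewrite rho_Sgens_c ?uperm_gen // signch_uperm scale1r. Qed.

Lemma rho_involution g : g \in WD n -> (g * g)%g = 1%g -> rho g * rho g = 1.
Proof. by move=> gW gg; rewrite -rhoM // gg. Qed.

Lemma equivariant_snswap a b : val a = (n - 2)%N -> val b = (n - 1)%N -> (1 < n)%N ->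
  equivariant (snswap a b).
Proof.
move=> aE bE n_gt1; have nab : a != b by rewrite -val_eqE aE bE; apply/eqP; lia.
set s := snswap a b.
have ss1 : rho s * rho s = 1 by apply: rho_involution; [apply: snswapWD | apply: snswapK].
move=> k; rewrite signch_snswap // under_snswap //.
case: (tpermP a b k) => [->|->|/eqP nak /eqP nbk].
- rewrite eqxx expr1 scaleN1r.
  have := congr1 (fun z => rho s * z * rho s) (rho_snswap_c_last aE bE); rewrite -/s /=.
  by rewrite mulrA ss1 mul1r mulrN mulNr -!mulrA ss1 mulr1 => ->; rewrite opprK.
- by rewrite eqxx orbT expr1 scaleN1r rho_snswap_c_last.
- by rewrite (negbTE nak) (negbTE nbk) scale1r rho_snswap_c.
Qed.

Lemma equivariant_sflip i j : (1 < n)%N -> i != j -> equivariant (sflip i j).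
Proof.
move=> n_gt1 nij.
have a_lt_n : (n - 2 < n)%N by lia.
have b_lt_n : (n - 1 < n)%N by lia.
pose a := Ordinal a_lt_n; pose b := Ordinal b_lt_n.
have nab : a != b by rewrite -val_eqE /=; apply/eqP; lia.
have sflip_ab : equivariant (sflip a b).
  rewrite sflip_sswap_snswap // -uperm_tperm.
  apply: equivariantM; rewrite ?upermWD ?snswapWD //.
    exact: equivariant_uperm.
  exact: equivariant_snswap.
pose t := (tperm a i * tperm (tperm a i b) j)%g.
have tb_i : tperm a i b != i.
  case: tpermP => [ba|<-|_ /eqP]; [by rewrite ba eqxx in nab | by [] | by rewrite eq_sym].
have ta : t a = i by rewrite permM tpermL tpermD // eq_sym.
have tb : t b = j by rewrite permM tpermL.
rewrite -ta -tb sflip_conj.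
apply: equivariantM; rewrite ?mulWD ?upermWD ?sflipWD //; last exact: equivariant_uperm.
by apply: equivariantM; rewrite ?upermWD ?sflipWD //; exact: equivariant_uperm.
Qed.

Lemma equivariant_WD w : (1 < n)%N -> w \in WD n -> equivariant w.
Proof.
move=> n_gt1; have [m] := ubnP #|[set i | signch w i]|.
elim: m w => // m IH w signs_lt wW.
have w_signed := WD_signed wW.
have [no_sign|[i i_sign]] := set_0Vmem [set i | signch w i].
  have unsigned i : signch w i = false by move: (in_set0 i); rewrite -no_sign inE.
  by have [p ->] := unsigned_uperm w_signed unsigned; apply: equivariant_uperm.
have [j j_sign] : exists j, j \in [set i | signch w i] :\ i.
  apply/set0Pn; apply: contraTneq wW => signs_i.
  by rewrite inE negb_and (cardsD1 i) i_sign signs_i cards0 orbT.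
move: j_sign i_sign; rewrite !inE => /andP[nji j_sign] i_sign.
have nij : i != j by rewrite eq_sym.
have w'W : (sflip i j * w)%g \in WD n by rewrite mulWD ?sflipWD.
have signs_w' : [set k | signch (sflip i j * w)%g k] \subset [set k | signch w k] :\ i.
  apply/subsetP => k; rewrite !inE signchM // under_sflip signch_sflip.
  by have [->|nki] := eqVneq k i; [rewrite i_sign | have [->|] := eqVneq k j; rewrite ?j_sign].
rewrite -[w]mul1g -(sflipK i j) -mulgA.
apply: equivariantM; [exact: sflipWD | exact: w'W | exact: equivariant_sflip | apply: IH w'W].
by move: signs_lt (subset_leq_card signs_w'); rewrite (cardsD1 i) inE i_sign; lia.
Qed.

Lemma equivariant_prod w s : equivariant w ->
  rho w * \prod_(i <- s) c i =
  (-1) ^+ count (signch w) s *: (\prod_(i <- map (under w) s) c i * rho w).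
Proof.
move=> w_eq; elim: s => [|i s IH]; first by rewrite !big_nil mulr1 mul1r scale1r.
rewrite big_cons mulrA w_eq -scalerAl -(mulrA _ (rho w)) IH -scalerAr scalerA -exprD.
by rewrite /= big_cons mulrA.
Qed.

Lemma c_prod_anticomm i s : i \notin s ->
  c i * \prod_(j <- s) c j = (-1) ^+ size s *: (\prod_(j <- s) c j * c i).
Proof.
elim: s => [|j s IH]; first by rewrite !big_nil mulr1 mul1r scale1r.
rewrite inE negb_or => /andP[nij /IH {}IH].
rewrite big_cons mulrA c_anticomm // mulNr -(mulrA (c j) (c i)) IH -scalerAr.
by rewrite /= exprS mulN1r scaleNr !mulrA.
Qed.

Lemma prod_c_rev s : \prod_(i <- s) c i * \prod_(i <- rev s) c i = 1.
Proof.
elim: s => [|i s IH]; first by rewrite !big_nil mul1r.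
by rewrite rev_cons big_rcons big_cons /= -mulrA (mulrA (\prod_(j <- s) c j)) IH mul1r c_sq.
Qed.

Lemma rho_prod_cycle w t : equivariant w -> uniq t -> (0 < size t)%N ->
  map (under w) t = rot 1 t ->
  rho w * \prod_(i <- t) c i =
  (-1) ^+ (count (signch w) t + (size t).-1) *: (\prod_(i <- t) c i * rho w).
Proof.
case: t => [//|i t] w_eq /andP[it _] _ cyc.
have swap : \prod_(j <- t) c j * c i = (-1) ^+ size t *: (c i * \prod_(j <- t) c j).
  by rewrite c_prod_anticomm // signrZK.
rewrite equivariant_prod // cyc rot1_cons big_rcons /= swap -scalerAl scalerA -exprD.
by rewrite big_cons.
Qed.

Lemma rho_in_comm_span w : (1 < n)%N -> w \in WD n ->
  ~ [&& isOP (ctype_lambda w), isEP (ctype_mu w) & ~~ odd (size (ctype_mu w))] ->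
  in_comm_span (rho w).
Proof.
move=> n_gt1 wW not_exceptional.
have [r parity_r] := cycle_of_equal_parity wW not_exceptional.
set t := fingraph.orbit (under w) r in parity_r.
have w_inj := under_inj (WD_signed wW).
have odd_sign : odd (count (signch w) t + (size t).-1).
  move: parity_r (orbit_size_gt0 (under w) r); rewrite -/t.
  by case: (size t) => //= m; rewrite oddD => ->; case: odd.
apply: (@anticommuting_in_comm_span _ _ (\prod_(i <- t) c i) (\prod_(i <- rev t) c i)).
- exact: prod_c_rev.
- by rewrite -[in X in _ * X](revK t) prod_c_rev.
- rewrite rho_prod_cycle ?fingraph.orbit_uniq ?orbit_size_gt0 ?map_orbit //.
    by rewrite -signr_odd odd_sign expr1 scaleN1r.
  exact: equivariant_WD.
Qed.

End CliffordAction.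

Unset Implicit Arguments.

Theorem proposition3p4p2 (n : nat) (u : CC) (A : algType CC)
    (x c : 'I_n -> A) (rho : {perm 'I_n * bool} -> A)
    (w : {perm 'I_n * bool}) :
  (4 <= n)%N ->
  HC_rels u x c rho ->
  w \in WD n ->
  let lam := ctype_lambda w in
  let mu := ctype_mu w in
  (odd n ->
     ~ [&& isOP lam, isEP mu & ~~ odd (size mu)] ->
     in_comm_span (rho w)) /\
  (~~ odd n ->
     ~ [&& isOP lam, isEP mu & ~~ odd (size mu)] ->
     ~ ((lam == [::]) && isSOP n mu) ->
     in_comm_span (rho w)).
Proof.
move=> n_ge4 [_ [c_sq [c_anticomm [rho1 [rhoM [_ [_ [rho_Sgens_c
               [_ [_ [rho_sn_c_last [rho_sn_c _]]]]]]]]]]]].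
move=> wW lam mu; have n_gt1 : (1 < n)%N by apply: leq_trans n_ge4.
have rho_w_comm :=
  rho_in_comm_span c_sq c_anticomm rho1 rhoM rho_Sgens_c rho_sn_c_last rho_sn_c n_gt1 wW.
by split=> _ not_exceptional; [|move=> _]; apply: rho_w_comm.
Qed.
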